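(* Consider the discrete-time linear Gaussian state-space model on time steps $k=1,2,\ldots,T$ (where $T=N+M$, with $N$ steps carrying an observation and $M$ steps with missing observation, in any order): $$\mathbf{x}_1 \sim \mathcal{N}(\mathbf{0},\mathbf{P}_\infty),\qquad \mathbf{x}_k = \mathbf{F}_{k-1}\mathbf{x}_{k-1} + \mathbf{q}_{k-1},\ \ \mathbf{q}_{k-1}\sim\mathcal{N}(\mathbf{0},\mathbf{Q}_{k-1})\ (k\ge 2),$$ $$y_k = \mathbf{H}\mathbf{x}_k + e_k,\quad e_k\sim\mathcal{N}(0,\sigma_k^2)\quad\text{for each observed step }k,$$ where $\mathbf{x}_k\in\mathbb{R}^{n_x}$, $\mathbf{H}\in\mathbb{R}^{1\times n_x}$, $\mathbf{P}_\infty,\mathbf{Q}_{k-1}$ are symmetric positive semidefinite, $\sigma_k^2>0$, and all noises are mutually independent and independent of $\mathbf{x}_1$. For each $k$ define an element $a_k=(\mathbf{A}_k,\mathbf{b}_k,\mathbf{C}_k,\boldsymbol{\eta}_k,\mathbf{J}_k)$ as follows. - If step $k$ has no observation: for $k>1$, $\mathbf{A}_k=\mathbf{F}_{k-1}$, $\mathbf{b}_k=\mathbf{0}$, $\mathbf{C}_k=\mathbf{Q}_{k-1}$; for $k=1$, $\mathbf{A}_1=\mathbf{0}$, $\mathbf{b}_1=\mathbf{0}$, $\mathbf{C}_1=\mathbf{P}_\infty$; and in both cases $\boldsymbol{\eta}_k=\mathbf{0}$, $\mathbf{J}_k=\mathbf{0}$. - If step $k>1$ has an observation: with $S_k=\mathbf{H}\mathbf{Q}_{k-1}\mathbf{H}^\top+\sigma_k^2$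 and $\mathbf{K}_k=\mathbf{Q}_{k-1}\mathbf{H}^\top S_k^{-1}$, set $\mathbf{A}_k=(\mathbf{I}-\mathbf{K}_k\mathbf{H})\mathbf{F}_{k-1}$, $\mathbf{b}_k=\mathbf{K}_k y_k$, $\mathbf{C}_k=(\mathbf{I}-\mathbf{K}_k\mathbf{H})\mathbf{Q}_{k-1}$, $\boldsymbol{\eta}_k=\mathbf{F}_{k-1}^\top\mathbf{H}^\top S_k^{-1}y_k$, $\mathbf{J}_k=\mathbf{F}_{k-1}^\top\mathbf{H}^\top S_k^{-1}\mathbf{H}\mathbf{F}_{k-1}$. - If step $k=1$ has an observation: with $S_1=\mathbf{H}\mathbf{P}_\infty\mathbf{H}^\top+\sigma_1^2$ and $\mathbf{K}_1=\mathbf{P}_\infty\mathbf{H}^\top S_1^{-1}$, set $\mathbf{A}_1=\mathbf{0}$, $\mathbf{b}_1=\mathbf{K}_1y_1$, $\mathbf{C}_1=\mathbf{P}_\infty-\mathbf{K}_1S_1\mathbf{K}_1^\top$, $\boldsymbol{\eta}_1=\mathbf{0}$, $\mathbf{J}_1=\mathbf{0}$. Define the binary operator $a_i\otimes a_j=(\mathbf{A}_{ij},\mathbf{b}_{ij},\mathbf{C}_{ij},\boldsymbol{\eta}_{ij},\mathbf{J}_{ij})$ by $$\mathbf{A}_{ij}=\mathbf{A}_j(\mathbf{I}+\mathbf{C}_i\mathbf{J}_j)^{-1}\mathbf{A}_i,\quad \mathbf{b}_{ij}=\mathbf{A}_j(\mathbf{I}+\mathbf{C}_i\mathbf{J}_j)^{-1}(\mathbf{b}_i+\mathbf{C}_i\boldsymbol{\eta}_j)+\mathbf{b}_j,$$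 $$\mathbf{C}_{ij}=\mathbf{A}_j(\mathbf{I}+\mathbf{C}_i\mathbf{J}_j)^{-1}\mathbf{C}_i\mathbf{A}_j^\top+\mathbf{C}_j,\quad \boldsymbol{\eta}_{ij}=\mathbf{A}_i^\top(\mathbf{I}+\mathbf{J}_j\mathbf{C}_i)^{-1}(\boldsymbol{\eta}_j-\mathbf{J}_j\mathbf{b}_i)+\boldsymbol{\eta}_i,$$ $$\mathbf{J}_{ij}=\mathbf{A}_i^\top(\mathbf{I}+\mathbf{J}_j\mathbf{C}_i)^{-1}\mathbf{J}_j\mathbf{A}_i+\mathbf{J}_i,$$ and the prefix elements $a_1^*=a_1$, $a_k^*=a_{k-1}^*\otimes a_k$ for $k\ge2$, writing $a_k^*=(\mathbf{A}^*_k,\mathbf{b}^*_k,\mathbf{C}^*_k,\boldsymbol{\eta}^*_k,\mathbf{J}^*_k)$. Then for all $k=1,\ldots,N+M$, the Kalman filter mean $\overline{\mathbf{x}}_k=\mathbb{E}[\mathbf{x}_k\mid \text{observations } y_j \text{ at observed steps } j\le k]$ and covariance $\mathbf{P}_k=\mathrm{Cov}[\mathbf{x}_k\mid \text{same observations}]$ satisfy $\overline{\mathbf{x}}_k=\mathbf{b}^*_k$ and $\mathbf{P}_k=\mathbf{C}^*_k$.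
   Context: This arises from a Gaussian process regression problem in state-space form: a continuous-time linear SDE $d\mathbf{x}(t)/dt=\mathbf{G}\mathbf{x}(t)+\mathbf{L}\mathbf{w}(t)$ with $f(t)=\mathbf{H}\mathbf{x}(t)$ started from its stationary covariance $\mathbf{P}_\infty$, discretized at the sorted union of training times (observed) and prediction times (treated as missing observations), giving transition matrices $\mathbf{F}_{k-1}$ and process noise covariances $\mathbf{Q}_{k-1}$. The sequential Kalman filter for this model performs, at each step, a prediction through the transition (for $k\ge2$) and a measurement update only at steps with an observation (no update at missing steps). The matrices $\mathbf{I}+\mathbf{C}_i\mathbf{J}_j$ arising in the operator are assumed invertible (they are, since the $\mathbf{C}$ and $\mathbf{J}$ components are positive semidefinite). The operator $\otimes$ is associative, so the prefix elements can be computed by a parallel scan. *)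

From HB Require Import structures.
From mathcomp Require Import all_boot all_order all_algebra.
Set Implicit Arguments. Unset Strict Implicit. Unset Printing Implicit Defensive.
Import Order.TTheory GRing.Theory Num.Theory.
Local Open Scope ring_scope.

Section KF.
Variables (R : realFieldType) (n : nat).

Definition psd (M : 'M[R]_n) : Prop :=
  M^T = M /\ forall v : 'cV[R]_n, 0 <= (v^T *m M *m v) 0 0.

(* The model data (time steps are numbered k = 1, 2, ...):
   F k, Q k  = F_k, Q_k  (so step k >= 2 uses F (k-1), Q (k-1)),
   obs k     = whether step k carries an observation,
   y k, s2 k = observation y_k and its noise variance sigma_k^2. *)
Variables (Pinf : 'M[R]_n) (F Q : nat -> 'M[R]_n) (H : 'rV[R]_n)
          (obs : nat -> bool) (y s2 : nat -> R).

Definition quadH (M : 'M[R]_n) : R := (H *m M *m H^T) 0 0.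

Definition kf_update (k : nat) (mP : 'cV[R]_n * 'M[R]_n) : 'cV[R]_n * 'M[R]_n :=
  let: (m, P) := mP in
  if obs k then
    let S := quadH P + s2 k in
    let K := S^-1 *: (P *m H^T) in
    (m + (y k - (H *m m) 0 0) *: K, P - S *: (K *m K^T))
  else (m, P).

Definition kf_predict (k : nat) (mP : 'cV[R]_n * 'M[R]_n) : 'cV[R]_n * 'M[R]_n :=
  let: (m, P) := mP in
  (F k.-1 *m m, F k.-1 *m P *m (F k.-1)^T + Q k.-1).

(* kf i = (filter mean, filter covariance) at step i.+1 *)
Fixpoint kf (i : nat) : 'cV[R]_n * 'M[R]_n :=
  match i with
  | 0 => kf_update 1 (0, Pinf)
  | i'.+1 => kf_update i'.+2 (kf_predict i'.+2 (kf i'))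
  end.

Definition kf_mean (k : nat) : 'cV[R]_n := (kf k.-1).1.
Definition kf_cov (k : nat) : 'M[R]_n := (kf k.-1).2.

Record elem := Elem {
  eA : 'M[R]_n; eb : 'cV[R]_n; eC : 'M[R]_n; eeta : 'cV[R]_n; eJ : 'M[R]_n }.

Definition elem_at (k : nat) : elem :=
  if k == 1%N then
    if obs 1 then
      let S := quadH Pinf + s2 1 in
      let K := S^-1 *: (Pinf *m H^T) in
      Elem 0 (y 1 *: K) (Pinf - S *: (K *m K^T)) 0 0
    else Elem 0 0 Pinf 0 0
  else
    if obs k then
      let S := quadH (Q k.-1) + s2 k in
      let K := S^-1 *: (Q k.-1 *m H^T) in
      let IKH := 1%:M - K *m H in
      Elem (IKH *m F k.-1) (y k *: K) (IKH *m Q k.-1)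
           ((S^-1 * y k) *: ((F k.-1)^T *m H^T))
           (S^-1 *: ((F k.-1)^T *m H^T *m H *m F k.-1))
    else Elem (F k.-1) 0 (Q k.-1) 0 0.

Definition elem_op (ai aj : elem) : elem :=
  let: Elem Ai bi Ci etai Ji := ai in
  let: Elem Aj bj Cj etaj Jj := aj in
  let M1 := invmx (1%:M + Ci *m Jj) in
  let M2 := invmx (1%:M + Jj *m Ci) in
  Elem (Aj *m M1 *m Ai)
       (Aj *m M1 *m (bi + Ci *m etaj) + bj)
       (Aj *m M1 *m Ci *m Aj^T + Cj)
       (Ai^T *m M2 *m (etaj - Jj *m bi) + etai)
       (Ai^T *m M2 *m Jj *m Ai + Ji).

(* prefix i = a*_{i.+1} *)
Fixpoint prefix (i : nat) : elem :=
  match i with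
  | 0 => elem_at 1
  | i'.+1 => elem_op (prefix i') (elem_at i'.+2)
  end.

Definition astar (k : nat) : elem := prefix k.-1.

End KF.

From Pilot Require Import Defs.
From HB Require Import structures.
From mathcomp Require Import all_boot all_order all_algebra.
Import Order.TTheory GRing.Theory Num.Theory.
Set Implicit Arguments.
Unset Strict Implicit.
Unset Printing Implicit Defensive.
Local Open Scope ring_scope.

(* Every prefix element has A = 0, eta = 0 and J = 0: a_1 has this shape and
   ⊗ preserves it.  Hence a*_(k-1) ⊗ a_k only depends on b*_(k-1), C*_(k-1),
   and the theorem reduces, by induction on k, to a single filter step.  For
   an observed step, with P the previous filtering covariance, K' the Kalman
   gain of the predicted covariance F P F^T + Q and K = Q H^T / S the gain
   used in a_k, everything follows from
     (I - K' H) F P F^T H^T = S (K' - K),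
   which gives A_k = (I - K' H) F (I + P J_k): inverting I + P J_k turns the
   transition of a_k into that of the filter.  The predicted innovation
   variance is nonzero, for otherwise I + P J_k would kill P F^T H^T. *)

Lemma mulmx_col_dot (R : comPzRingType) p q (x : 'M[R]_(p, 1)) (z : 'rV[R]_q)
    (w : 'cV[R]_q) :
  x *m z *m w = (z *m w) 0 0 *: x.
Proof. by rewrite -mulmxA {1}[z *m w]mx11_scalar mul_mx_scalar. Qed.

Section KalmanStep.
Variables (R : fieldType) (n : nat) (F P Q : 'M[R]_n) (H : 'rV[R]_n) (s : R).

(* S and K are computed from Q alone, as in a_k; S' and K' from the
   predicted covariance Pm, as in the filter. *)
Local Notation u := (F^T *m H^T).
Local Notation Pm := (F *m P *m F^T + Q).
Local Notation v := (F *m P *m u).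
Local Notation S := ((H *m Q *m H^T) 0 0 + s).
Local Notation S' := ((H *m Pm *m H^T) 0 0 + s).
Local Notation K := (S^-1 *: (Q *m H^T)).
Local Notation K' := (S'^-1 *: (Pm *m H^T)).
Local Notation J := (S^-1 *: (u *m H *m F)).

Hypothesis S_neq0 : S != 0.

Lemma innovation_var_split : S' = S + (H *m v) 0 0.
Proof. by rewrite mulmxDr mulmxDl mxE !mulmxA [RHS]addrC addrA. Qed.

Lemma innovation_var_neq0 : (1%:M + P *m J) \in unitmx -> S' != 0.
Proof.
move=> PJ_unit; apply/eqP => S'0.
have q_eq : (H *m v) 0 0 = - S.
  by apply/eqP; rewrite -addr_eq0 addrC -innovation_var_split S'0.
have PJ_Pu : (1%:M + P *m J) *m (P *m u) = 0.
  have JPu : u *m H *m F *m (P *m u) = - S *: u.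
    by rewrite -(mulmxA _ F) (mulmxA F P) mulmx_col_dot q_eq.
  rewrite mulmxDl mul1mx -mulmxA -scalemxAl JPu scalerA mulrN mulVf //.
  by rewrite scaleN1r mulmxN subrr.
have Pu0 : P *m u = 0.
  by rewrite -[P *m u]mul1mx -(mulVmx PJ_unit) -(mulmxA (invmx _)) PJ_Pu mulmx0.
have q0 : (H *m v) 0 0 = 0 by rewrite -mulmxA Pu0 !mulmx0 mxE.
by move: S_neq0; rewrite -oppr_eq0 -q_eq q0 eqxx.
Qed.

Hypothesis S'_neq0 : S' != 0.

Lemma gain_diff : (1%:M - K' *m H) *m v = S *: (K' - K).
Proof.
have v_eq : v = S *: K' + (H *m v) 0 0 *: K' - Q *m H^T.
  by rewrite -scalerDl -innovation_var_split scalerKV // mulmxDl !mulmxA addrK.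
rewrite mulmxBl mul1mx mulmx_col_dot scalerBr scalerKV //.
by rewrite {1}v_eq addrAC addrK.
Qed.

Lemma gain_factor : (1%:M - K *m H) *m F = (1%:M - K' *m H) *m F *m (1%:M + P *m J).
Proof.
rewrite -(mulmxA _ F).
have -> : F *m (1%:M + P *m J) = (1%:M + S^-1 *: (v *m H)) *m F.
  by rewrite mulmxDr mulmxDl mulmx1 mul1mx -!scalemxAr -!scalemxAl !mulmxA.
rewrite (mulmxA _ _ F); congr (_ *m F).
rewrite (mulmxDr (1%:M - K' *m H)) mulmx1 -scalemxAr (mulmxA _ v) gain_diff.
rewrite -(scalemxAl S) scalerK //.
by rewrite mulmxBl addrA subrK.
Qed.

Hypothesis PJ_unit : (1%:M + P *m J) \in unitmx.

Lemma gain_factorV :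
  (1%:M - K *m H) *m F *m invmx (1%:M + P *m J) = (1%:M - K' *m H) *m F.
Proof. by rewrite gain_factor mulmxK. Qed.

Lemma kalman_mean_step (m : 'cV[R]_n) (yk : R) :
  (1%:M - K *m H) *m F *m invmx (1%:M + P *m J) *m (m + P *m ((S^-1 * yk) *: u))
    + yk *: K
  = F *m m + (yk - (H *m (F *m m)) 0 0) *: K'.
Proof.
have IKF_Pu : (1%:M - K' *m H) *m F *m (P *m u) = S *: (K' - K).
  by rewrite -mulmxA (mulmxA F) gain_diff.
rewrite gain_factorV (mulmxDr (_ *m F)) -(scalemxAr _ P) -(scalemxAr _ (_ *m F)).
rewrite IKF_Pu.
rewrite scalerA mulrAC mulVf // mul1r -addrA -scalerDr subrK.
by rewrite -(mulmxA _ F m) mulmxBl mul1mx mulmx_col_dot scalerBl addrA addrAC.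
Qed.

Lemma kalman_cov_step : P^T = P -> Q^T = Q ->
  (1%:M - K *m H) *m F *m invmx (1%:M + P *m J) *m P *m ((1%:M - K *m H) *m F)^T
    + (1%:M - K *m H) *m Q
  = Pm - S' *: (K' *m K'^T).
Proof.
move=> P_sym Q_sym.
have Pm_sym : Pm^T = Pm.
  by rewrite linearD /= !trmx_mul trmxK P_sym Q_sym mulmxA.
have SKT : S *: K^T = H *m Q.
  by rewrite linearZ /= scalerKV // trmx_mul Q_sym trmxK.
have S'K'K' : S' *: (K' *m K'^T) = K' *m H *m Pm.
  by rewrite [K'^T]linearZ /= -scalemxAr scalerKV // trmx_mul Pm_sym trmxK mulmxA.
have cross : (1%:M - K' *m H) *m F *m P *m ((1%:M - K *m H) *m F)^T
    = (1%:M - K' *m H) *m (F *m P *m F^T) - (K' - K) *m H *m Q.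
  have gain := gain_diff; rewrite !mulmxA in gain.
  rewrite trmx_mul [(1%:M - _)^T]linearB /= trmx1 trmx_mul !mulmxBr !mulmx1 !mulmxA gain.
  by rewrite -(scalemxAl S) (scalemxAr S) SKT mulmxA.
have IKH_split : 1%:M - K *m H = (K' - K) *m H + (1%:M - K' *m H).
  by rewrite mulmxBl [RHS]addrC addrA subrK.
rewrite gain_factorV S'K'K' cross IKH_split (mulmxDl ((K' - K) *m H)) subrKA.
by rewrite -mulmxDr mulmxBl mul1mx.
Qed.
End KalmanStep.

Lemma quadH_ge0 (R : realFieldType) n (H : 'rV[R]_n) (M : 'M[R]_n) :
  psd M -> 0 <= quadH H M.
Proof. by case=> _ /(_ H^T); rewrite trmxK. Qed.

Lemma elem_op_filtering (R : realFieldType) n (b : 'cV[R]_n) (C : 'M[R]_n)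
    (a : elem R n) :
  elem_op (Elem 0 b C 0 0) a =
  Elem 0 (eA a *m invmx (1%:M + C *m eJ a) *m (b + C *m eeta a) + eb a)
         (eA a *m invmx (1%:M + C *m eJ a) *m C *m (eA a)^T + eC a) 0 0.
Proof. by case: a => A' b' C' eta' J' /=; rewrite !mulmx0 trmx0 !mul0mx !addr0. Qed.

Section ScanFilter.
Variables (R : realFieldType) (n : nat) (Pinf : 'M[R]_n) (F Q : nat -> 'M[R]_n)
  (H : 'rV[R]_n) (obs : nat -> bool) (y s2 : nat -> R).

Local Notation kf := (Defs.kf Pinf F Q H obs y s2).
Local Notation kf_update := (Defs.kf_update H obs y s2).
Local Notation kf_predict := (Defs.kf_predict F Q).
Local Notation prefix := (Defs.prefix Pinf F Q H obs y s2).
Local Notation elem_at := (Defs.elem_at Pinf F Q H obs y s2).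

Lemma prefix_filtering i : prefix i = Elem 0 (eb (prefix i)) (eC (prefix i)) 0 0.
Proof.
elim: i => [|i IH] /=; first by rewrite /Defs.elem_at /=; case: (obs 1).
by rewrite IH elem_op_filtering.
Qed.

Lemma kf_update_sym k (mP : 'cV[R]_n * 'M[R]_n) :
  mP.2^T = mP.2 -> (kf_update k mP).2^T = (kf_update k mP).2.
Proof.
case: mP => m P /= P_sym; rewrite /Defs.kf_update; case: (obs k) => //=.
by rewrite [(_ - _)^T]linearB /= P_sym [(_ *: _)^T]linearZ /= trmx_mul trmxK.
Qed.

Lemma kf_predict_sym k (mP : 'cV[R]_n * 'M[R]_n) :
  mP.2^T = mP.2 -> (Q k.-1)^T = Q k.-1 -> (kf_predict k mP).2^T = (kf_predict k mP).2.
Proof.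
case: mP => m P /= P_sym Q_sym.
by rewrite [(_ + _)^T]linearD /= !trmx_mul trmxK P_sym Q_sym mulmxA.
Qed.

Lemma kf_step_elem_op k b C :
  (1 < k)%N -> C^T = C -> (Q k.-1)^T = Q k.-1 ->
  (obs k -> quadH H (Q k.-1) + s2 k != 0) ->
  (1%:M + C *m eJ (elem_at k)) \in unitmx ->
  kf_update k (kf_predict k (b, C)) =
  (eb (elem_op (Elem 0 b C 0 0) (elem_at k)),
   eC (elem_op (Elem 0 b C 0 0) (elem_at k))).
Proof.
move=> k_gt1 C_sym Q_sym S_neq0.
rewrite elem_op_filtering /Defs.elem_at /Defs.kf_update /Defs.kf_predict /=.
rewrite (gtn_eqF k_gt1).
case: (obs k) S_neq0 => [/(_ isT) S_neq0 | _] /= PJ_unit.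
  have S'_neq0 := innovation_var_neq0 S_neq0 PJ_unit.
  rewrite /quadH; congr pair; symmetry.
    exact: kalman_mean_step.
  exact: kalman_cov_step.
by rewrite !mulmx0 !addr0 invmx1 !mulmx1.
Qed.

Variable T : nat.
Hypothesis Pinf_sym : Pinf^T = Pinf.
Hypothesis Q_sym : forall k, (2 <= k <= T)%N -> (Q k.-1)^T = Q k.-1.
Hypothesis S_neq0 : forall k, (2 <= k <= T)%N -> obs k -> quadH H (Q k.-1) + s2 k != 0.
Hypothesis scan_unit : forall k, (2 <= k <= T)%N ->
  (1%:M + eC (prefix k.-2) *m eJ (elem_at k)) \in unitmx.

Lemma kf_cov_sym i : (i < T)%N -> (kf i).2^T = (kf i).2.
Proof.
elim: i => [_ | i IH lt_iT]; first exact: kf_update_sym.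
by apply/kf_update_sym/kf_predict_sym; [exact/IH/ltnW | exact: Q_sym].
Qed.

Lemma kf_prefix i : (i < T)%N -> kf i = (eb (prefix i), eC (prefix i)).
Proof.
elim: i => [_ | i IH lt_iT].
  rewrite /= /Defs.kf_update /Defs.elem_at /=; case: (obs 1) => //=.
  by rewrite mulmx0 mxE subr0 add0r.
have le_iT := ltnW lt_iT.
have C_sym : (eC (prefix i))^T = eC (prefix i).
  by have := kf_cov_sym le_iT; rewrite IH.
have k_range : (2 <= i.+2 <= T)%N by [].
have step := kf_step_elem_op _ _ C_sym (Q_sym k_range) (S_neq0 k_range)
  (scan_unit k_range).
by rewrite /= IH // step // [in RHS]prefix_filtering.
Qed.

End ScanFilter.

Theorem proposition1 (R : realFieldType) (nx : nat)
  (Pinf : 'M[R]_nx) (F Q : nat -> 'M[R]_nx) (H : 'rV[R]_nx)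
  (obs : nat -> bool) (y s2 : nat -> R) (T : nat) :
  psd Pinf ->
  (forall k, (2 <= k <= T)%N -> psd (Q k.-1)) ->
  (forall k, (1 <= k <= T)%N -> obs k -> 0 < s2 k) ->
  (* invertibility of I + C_i J_j in the prefix computation (assumed) *)
  (forall k, (2 <= k <= T)%N ->
     (1%:M + eC (astar Pinf F Q H obs y s2 k.-1)
             *m eJ (elem_at Pinf F Q H obs y s2 k)) \in unitmx) ->
  forall k, (1 <= k <= T)%N ->
    kf_mean Pinf F Q H obs y s2 k = eb (astar Pinf F Q H obs y s2 k) /\
    kf_cov Pinf F Q H obs y s2 k = eC (astar Pinf F Q H obs y s2 k).
Proof.
move=> [Pinf_sym _] Q_psd s2_pos scan_unit k /andP[k_ge1 k_leT].
have Q_sym k' : (2 <= k' <= T)%N -> (Q k'.-1)^T = Q k'.-1.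
  by case/Q_psd.
have S_neq0 k' : (2 <= k' <= T)%N -> obs k' -> quadH H (Q k'.-1) + s2 k' != 0.
  move=> k'_range obs_k'; apply/lt0r_neq0/ltr_wpDl; first exact/quadH_ge0/Q_psd.
  by apply: s2_pos obs_k'; case/andP: k'_range => /ltnW -> ->.
rewrite /kf_mean /kf_cov /astar (kf_prefix Pinf_sym Q_sym S_neq0 scan_unit) //.
by rewrite prednK.
Qed.
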